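(* Let $V$ be a finite-dimensional $G$-module for an algebraic group $G$. (1) For every closed subgroup $H\subset G$ the fixed point set $V^H$ is $G$-symmetric. (2) For all $v\in V$ we have $M(v)=\operatorname{End}_G(V)(v)\subset V^{G_v}$.
   Context: $\Bbbk$ is algebraically closed of characteristic $0$. Vector fields on $V$ are polynomial maps $\xi\colon V\to V$; $\xi$ is $G$-invariant if $\xi(gv)=g\xi(v)$. A closed subvariety $X\subset V$ is $G$-symmetric if $\xi(x)\in T_xX$ for all $x\in X$ and all $G$-invariant vector fields $\xi$. $M(v)$ is the smallest closed $G$-symmetric subvariety containing $v$. $\operatorname{End}_G(V)$ is the set of $G$-equivariant polynomial maps $V\to V$ and $\operatorname{End}_G(V)(v)=\{\phi(v)\mid\phi\in\operatorname{End}_G(V)\}$. $G_v$ is the stabilizer of $v$. *)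

From HB Require Import structures.
From mathcomp Require Import all_boot all_order all_algebra.
From mathcomp Require Import mpoly.
Set Implicit Arguments. Unset Strict Implicit. Unset Printing Implicit Defensive.
Import GRing.Theory.
Local Open Scope ring_scope.

Section Defs.
Variables (k : closedFieldType) (n : nat).

(* V = k^n, written as column vectors; coordinates of a vector *)
Definition coords (x : 'cV[k]_n) : 'I_n -> k := fun j => x j 0.

Definition polymap (f : 'cV[k]_n -> 'cV[k]_n) : Prop :=
  exists p : 'I_n -> {mpoly k[n]}, forall x i, f x i 0 = (p i).@[coords x].

Definition zclosed (X : 'cV[k]_n -> Prop) : Prop :=
  exists S : {mpoly k[n]} -> Prop,
    forall x, X x <-> (forall p, S p -> p.@[coords x] = 0).

Definition vanishes_on (X : 'cV[k]_n -> Prop) (p : {mpoly k[n]}) : Prop :=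
  forall x, X x -> p.@[coords x] = 0.

Definition tangent (X : 'cV[k]_n -> Prop) (x w : 'cV[k]_n) : Prop :=
  forall p, vanishes_on X p ->
    \sum_(i < n) (mderiv i p).@[coords x] * w i 0 = 0.

(* Zariski-closed subsets of GL_n(k) = GL(V): we test polynomials in the
   n*n matrix entries (via mxvec) *)
Definition mx_coords (g : 'M[k]_n) : 'I_(n * n) -> k := fun j => mxvec g 0 j.

Definition closed_subgroup (G : 'M[k]_n -> Prop) : Prop :=
  [/\ forall g, G g -> g \in unitmx,
      G 1%:M,
      forall g h, G g -> G h -> G (g *m h),
      forall g, G g -> G (invmx g)
    & exists S : {mpoly k[n * n]} -> Prop,
        forall g, G g <-> (g \in unitmx /\ forall p, S p -> p.@[mx_coords g] = 0)].

Definition equivariant (G : 'M[k]_n -> Prop) (f : 'cV[k]_n -> 'cV[k]_n) : Prop :=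
  forall g x, G g -> f (g *m x) = g *m f x.

Definition inv_vfield (G : 'M[k]_n -> Prop) (xi : 'cV[k]_n -> 'cV[k]_n) : Prop :=
  polymap xi /\ equivariant G xi.

Definition G_symmetric (G : 'M[k]_n -> Prop) (X : 'cV[k]_n -> Prop) : Prop :=
  zclosed X /\
  forall xi, inv_vfield G xi -> forall x, X x -> tangent X x (xi x).

Definition is_M (G : 'M[k]_n -> Prop) (v : 'cV[k]_n) (X : 'cV[k]_n -> Prop) : Prop :=
  [/\ G_symmetric G X, X v &
      forall Y, G_symmetric G Y -> Y v -> forall x, X x -> Y x].

Definition EndG (G : 'M[k]_n -> Prop) (phi : 'cV[k]_n -> 'cV[k]_n) : Prop :=
  polymap phi /\ equivariant G phi.

Definition EndG_at (G : 'M[k]_n -> Prop) (v : 'cV[k]_n) : 'cV[k]_n -> Prop :=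
  fun w => exists phi, EndG G phi /\ w = phi v.

Definition fixed (H : 'M[k]_n -> Prop) : 'cV[k]_n -> Prop :=
  fun x => forall h, H h -> h *m x = x.

Definition stab (G : 'M[k]_n -> Prop) (v : 'cV[k]_n) : 'M[k]_n -> Prop :=
  fun g => G g /\ g *m v = v.

End Defs.

From HB Require Import structures.
From mathcomp Require Import all_boot all_order all_algebra.
From mathcomp Require Import mpoly.
From Stdlib Require Import Classical.
From mathcomp Require Import zify.
Set Implicit Arguments. Unset Strict Implicit. Unset Printing Implicit Defensive.
Import GRing.Theory.
Local Open Scope ring_scope.

(* V^H and End_G(V)(v) are linear subspaces, hence Zariski closed, and a linear
   subspace is its own tangent space at each of its points.  A G-invariant vector
   field maps V^H into itself (it commutes with H, which lies in G) and maps
   End_G(V)(v) into itself (compose with the equivariant maps), so both are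
   G-symmetric; an equivariant map sends v into V^{G_v}.

   Minimality of End_G(V)(v): let Y be G-symmetric with v in Y and phi in End_G(V),
   and put Q = phi - id, a G-invariant polynomial vector field.  Tangency says that
   for every invariant field P the derivation D_P p = sum_i P_i d_i p preserves the
   ideal of Y.  The polarised derivatives d^j p (Q_1, ..., Q_j) with invariant Q_i
   then lie in that ideal too, by induction on j: the Leibniz rule expresses
   d^(j+1) p (Q_1, ..., Q_j, P) through D_P (d^j p (Q_1, ..., Q_j)) and terms in
   which some Q_l is replaced by D_P Q_l, which is invariant again.  For y in Y the
   values d^j p (Q, ..., Q) (y) are the Taylor coefficients of s |-> p (y + s Q(y)),
   so in characteristic 0 this polynomial vanishes and y + Q(y) lies in Y; for
   y = v this gives phi(v) in Y. *)

Lemma poly_horner_eq (k : closedFieldType) (p q : {poly k}) :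
  (forall s, p.[s] = q.[s]) -> p = q.
Proof.
move=> pq; apply/eqP; rewrite -subr_eq0; apply/negPn/negP => nz_pq.
(* otherwise [(p - q) * 'X + 1] would be a nonconstant polynomial without roots *)
have: size ((p - q) * 'X + 1%:P) != 1%N.
  by rewrite size_MXaddC (negbTE nz_pq) /= eqSS size_poly_eq0.
case/closed_rootP => s /rootP.
rewrite hornerD hornerMX hornerC hornerD hornerN pq subrr mul0r add0r => /eqP.
by rewrite oner_eq0.
Qed.

Lemma poly_derivn0_eq0 (R : idomainType) (p : {poly R}) :
  [pchar R] =i pred0 -> (forall j, p^`(j).[0] = 0) -> p = 0.
Proof.
move=> /pcharf0P charR0 p0; apply/polyP => j; rewrite coef0.
have /eqP := p0 j; rewrite horner_coef0 coef_derivn addn0 ffactnn -mulr_natr.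
by rewrite mulf_eq0 charR0 eqn0Ngt fact_gt0 orbF => /eqP.
Qed.

Section Derivations.
Variables (R : comNzRingType) (n : nat).
Implicit Types (p q : {mpoly R[n]}) (a w : 'I_n -> R).
Local Notation field := {ffun 'I_n -> {mpoly R[n]}}.

Lemma mpoly_ind_ring (P : {mpoly R[n]} -> Prop) :
  (forall c, P c%:MP) -> (forall i, P 'X_i) ->
  (forall p q, P p -> P q -> P (p + q)) ->
  (forall p q, P p -> P q -> P (p * q)) -> forall p, P p.
Proof.
move=> PC PX PD PM p; rewrite (mpolyE p).
apply: (big_ind P); [by rewrite -mpolyC0 | exact: (PD) | move=> m _].
rewrite -mul_mpolyC; apply: (PM) => //; rewrite mpolyXE_id.
apply: (big_ind P); [by rewrite -mpolyC1 | exact: (PM) | move=> i _].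
by elim: (m i) => [|e IH]; [rewrite expr0 -mpolyC1 | rewrite exprS; apply: (PM)].
Qed.

Lemma mderivXU i j : ('X_i : {mpoly R[n]})^`M(j) = (i == j)%:R.
Proof.
rewrite mderivX mnm1E; case: eqP => [->|_]; last by rewrite scale0r.
have -> : (U_(j) - U_(j) = 0)%MM by apply/mnmP => l; rewrite mnmBE mnm0E subnn.
by rewrite mpolyX0 scale1r.
Qed.

Definition vderiv (Q : field) p : {mpoly R[n]} := \sum_i Q i * p^`M(i).

Lemma vderiv_is_linear Q : linear (vderiv Q).
Proof.
move=> c p q; rewrite /vderiv scaler_sumr -big_split; apply: eq_bigr => i _.
by rewrite linearP mulrDr scalerAr.
Qed.

HB.instance Definition _ Q :=
  GRing.isLinear.Build R {mpoly R[n]} {mpoly R[n]} _ (vderiv Q) (vderiv_is_linear Q).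

Lemma vderivM Q p q : vderiv Q (p * q) = vderiv Q p * q + p * vderiv Q q.
Proof.
rewrite /vderiv mulr_suml mulr_sumr -big_split; apply: eq_bigr => i _.
by rewrite mderivM mulrDr !mulrA [Q i * p]mulrC.
Qed.

Lemma vderivC Q c : vderiv Q c%:MP = 0.
Proof. by rewrite /vderiv big1 // => i _; rewrite mderivC mulr0. Qed.

Lemma vderivXU Q i : vderiv Q 'X_i = Q i.
Proof.
rewrite /vderiv (bigD1 i) //= mderivXU eqxx mulr1 big1 ?addr0 //.
by move=> j /negbTE ji; rewrite mderivXU eq_sym ji mulr0.
Qed.

Lemma meval_vderiv a Q p :
  (vderiv Q p).@[a] = \sum_i (p^`M(i)).@[a] * (Q i).@[a].
Proof. by rewrite /vderiv raddf_sum /=; apply: eq_bigr => i _; rewrite mevalM mulrC. Qed.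

Definition const_field w : field := [ffun i => (w i)%:MP].

Definition vderiv_field (P Q : field) : field := [ffun m => vderiv P (Q m)].

(* [deriv_along [:: Q_1; ...; Q_j] p] is the polarised derivative d^j p (Q_1, ..., Q_j),
   i.e. the sum of Q_1 i_1 * ... * Q_j i_j * d_(i_1) ... d_(i_j) p over all i_1, ..., i_j. *)
Fixpoint deriv_along (Qs : seq field) p : {mpoly R[n]} :=
  if Qs is Q :: Qs' then \sum_i Q i * deriv_along Qs' p^`M(i) else p.

Lemma deriv_along_is_linear Qs : linear (deriv_along Qs).
Proof.
elim: Qs => [//|Q Qs IH] c p q /=; rewrite scaler_sumr -big_split.
by apply: eq_bigr => i _; rewrite linearP IH mulrDr scalerAr.
Qed.

HB.instance Definition _ (Qs : seq field) :=
  GRing.isLinear.Build R {mpoly R[n]} {mpoly R[n]} _ (deriv_along Qs) (deriv_along_is_linear Qs).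

Lemma deriv_along_vderiv_const Qs w p :
  deriv_along Qs (vderiv (const_field w) p) = deriv_along (const_field w :: Qs) p.
Proof.
rewrite /= linear_sum; apply: eq_bigr => i _.
by rewrite ffunE !mul_mpolyC linearZ.
Qed.

Lemma meval_deriv_along a Qs p :
  (deriv_along Qs p).@[a] =
  (deriv_along [seq const_field (fun i => (Q i).@[a]) | Q : field <- Qs] p).@[a].
Proof.
elim: Qs p => [//|Q Qs IH] p /=; rewrite !raddf_sum /=; apply: eq_bigr => i _.
by rewrite !mevalM IH ffunE mevalC.
Qed.

Lemma vderiv_deriv_along P Qs p :
  vderiv P (deriv_along Qs p) = deriv_along (rcons Qs P) p +
    \sum_(l < size Qs) deriv_along (set_nth 0 Qs l (vderiv_field P (nth 0 Qs l))) p.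
Proof.
elim: Qs p => [|Q Qs IH] p /=; first by rewrite big_ord0 addr0.
rewrite linear_sum big_ord_recl /=.
under eq_bigr => i _ do rewrite vderivM IH mulrDr.
rewrite !big_split /= addrA [RHS]addrC -!addrA; congr (_ + _).
  by apply: eq_bigr => i _; rewrite ffunE.
rewrite addrC; congr (_ + _).
by rewrite exchange_big /=; apply: eq_bigr => l _; rewrite mulr_sumr.
Qed.

Definition restr_line a w p : {poly R} :=
  mmap (@polyC R) (fun i => (a i)%:P + w i *: 'X) p.

Lemma horner_restr_line a w p s :
  (restr_line a w p).[s] = p.@[fun i => a i + s * w i].
Proof.
elim/mpoly_ind_ring: p => [c|i|p q IHp IHq|p q IHp IHq]; rewrite /restr_line.
- by rewrite mmapC mevalC hornerC.
- by rewrite mmapX mmap1U mevalXU hornerD hornerC hornerZ hornerX mulrC.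
- by rewrite rmorphD hornerD IHp IHq mevalD.
- by rewrite rmorphM hornerM IHp IHq mevalM.
Qed.

Lemma horner_restr_line0 a w p : (restr_line a w p).[0] = p.@[a].
Proof. by rewrite horner_restr_line; apply: meval_eq => i; rewrite mul0r addr0. Qed.

Lemma deriv_restr_line a w p :
  (restr_line a w p)^`() = restr_line a w (vderiv (const_field w) p).
Proof.
elim/mpoly_ind_ring: p => [c|i|p q IHp IHq|p q IHp IHq]; rewrite /restr_line.
- by rewrite vderivC !mmapC derivC.
- rewrite vderivXU ffunE mmapX mmap1U mmapC.
  by rewrite derivD derivC derivZ derivX add0r alg_polyC.
- by rewrite rmorphD derivD IHp IHq linearD rmorphD.
- by rewrite rmorphM derivM IHp IHq vderivM rmorphD !rmorphM.
Qed.

Lemma derivn_restr_line a w j p :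
  (restr_line a w p)^`(j) = restr_line a w (deriv_along (nseq j (const_field w)) p).
Proof.
elim: j p => [//|j IH] p.
by rewrite derivSn deriv_restr_line IH deriv_along_vderiv_const.
Qed.

End Derivations.

Section Symmetric.
Variables (k : closedFieldType) (n : nat).
Implicit Types (G H : 'M[k]_n -> Prop) (L : 'cV[k]_n -> Prop).
Implicit Types (x w : 'cV[k]_n) (p : {mpoly k[n]}).

Lemma coordsDZ x w s : coords (x + s *: w) =1 (fun i => coords x i + s * coords w i).
Proof. by move=> i; rewrite /coords !mxE. Qed.

Definition is_subspace L := L 0 /\ forall x w s, L x -> L w -> L (x + s *: w).

Lemma tangent_subspace L x w : is_subspace L -> L x -> L w -> tangent L x w.
Proof.
move=> [_ Ladd] Lx Lw p Lp.
have line0 : restr_line (coords x) (coords w) p = 0.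
  apply: poly_horner_eq => s; rewrite horner_restr_line horner0 -(Lp (x + s *: w)).
    by apply: meval_eq => i; rewrite coordsDZ.
  exact: Ladd.
have := congr1 (fun q => q^`().[0]) line0.
rewrite /= deriv_restr_line horner_restr_line0 meval_vderiv deriv0 horner0 => sum0.
by rewrite -[RHS]sum0; apply: eq_bigr => i _; rewrite ffunE mevalC.
Qed.

Lemma subspace_rowspace L : is_subspace L ->
  exists B : 'M[k]_n, forall x, L x <-> (x^T <= B)%MS.
Proof.
move=> [L0 Ladd].
have LZ s x : L x -> L (s *: x) by move=> Lx; rewrite -[_ *: x]add0r; exact: Ladd.
have LD x y : L x -> L y -> L (x + y) by move=> Lx Ly; rewrite -[y]scale1r; exact: Ladd.
pose rows_in (A : 'M[k]_n) := forall u : 'rV[k]_n, (u <= A)%MS -> L u^T.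
have extend A : rows_in A -> (forall x, L x <-> (x^T <= A)%MS) \/
    exists2 A' : 'M[k]_n, rows_in A' & (\rank A < \rank A')%N.
  move=> inA; have [[x Lx notA]|Lsub] := classic (exists2 x, L x & ~~ (x^T <= A)%MS).
    right; exists (A + x^T)%MS; last first.
      by apply: rank_ltmx; rewrite ltmxE addsmxSl addsmx_sub submx_refl.
    move=> u /sub_addsmxP [[u1 u2] /= ->]; rewrite linearD /=.
    apply: LD; first exact/inA/submxMl.
    by have /sub_rVP [c ->] := submxMl u2 x^T; rewrite linearZ /= trmxK; exact: LZ.
  left=> x; split=> [Lx|/inA]; last by rewrite trmxK.
  by apply: contraT => notA; case: Lsub; exists x.
suff grow m A : (n - \rank A <= m)%N -> rows_in A ->
    exists B : 'M[k]_n, forall x, L x <-> (x^T <= B)%MS.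
  apply: (grow n 0); first exact: leq_subr.
  by move=> u; rewrite submx0 => /eqP ->; rewrite trmx0.
elim: m A => [|m IH] A rkA /extend [LA|[A' inA' rkAA']]; try by exists A.
  by move: rkA (rank_leq_col A'); lia.
by apply: (IH A') => //; move: rkA (rank_leq_col A'); lia.
Qed.

Lemma subspace_zclosed L : is_subspace L -> zclosed L.
Proof.
move=> /subspace_rowspace [B LB].
pose K := cokermx B.
exists (fun p => exists j : 'I_n, p = \sum_i K i j *: 'X_i) => x.
have evalK j : (\sum_i K i j *: 'X_i : {mpoly k[n]}).@[coords x] = (x^T *m K) 0 j.
  rewrite raddf_sum /= mxE; apply: eq_bigr => i _.
  by rewrite mevalZ mevalXU /coords !mxE mulrC.
rewrite LB submxE; split => [/eqP xK0 _ [j ->]|xK0]; first by rewrite evalK xK0 mxE.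
apply/eqP/matrixP => i j; rewrite ord1 [RHS]mxE -evalK; exact: xK0 (ex_intro _ j erefl).
Qed.

Lemma subspace_G_symmetric G L : is_subspace L ->
  (forall xi x, inv_vfield G xi -> L x -> L (xi x)) -> G_symmetric G L.
Proof.
move=> Lsub Lstable; split; first exact: subspace_zclosed.
by move=> xi hxi x Lx; apply: tangent_subspace; last exact: Lstable.
Qed.

Lemma fixed_G_symmetric G H : (forall h, H h -> G h) -> G_symmetric G (fixed H).
Proof.
move=> HG; apply: subspace_G_symmetric.
  split=> [h _|x w s Hx Hw h Hh]; first by rewrite mulmx0.
  by rewrite mulmxDr -scalemxAr Hx // Hw.
by move=> xi x [_ xi_eq] Hx h Hh; rewrite -xi_eq ?Hx //; exact: HG.
Qed.

End Symmetric.

Section Minimality.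
Variables (k : closedFieldType) (n : nat).
Implicit Types (G : 'M[k]_n -> Prop) (Y : 'cV[k]_n -> Prop).
Local Notation field := {ffun 'I_n -> {mpoly k[n]}}.
Implicit Types (x y v w : 'cV[k]_n) (p : {mpoly k[n]}) (P Q : field).

Definition mpoly_map Q x : 'cV[k]_n := \col_i (Q i).@[coords x].

Lemma coords_mpoly_map Q x : coords (mpoly_map Q x) =1 (fun i => (Q i).@[coords x]).
Proof. by move=> i; rewrite /coords mxE. Qed.

Lemma polymap_mpoly_map Q : polymap (mpoly_map Q).
Proof. by exists Q => x i; rewrite mxE. Qed.

Lemma polymapP f : polymap f -> exists Q, f =1 mpoly_map Q.
Proof.
case=> q fq; exists [ffun i => q i] => x; apply/matrixP => i j.
by rewrite ord1 fq !mxE ffunE.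
Qed.

Lemma restr_line_equivariant G Q g x w m :
  equivariant G (mpoly_map Q) -> G g ->
  restr_line (coords (g *m x)) (coords (g *m w)) (Q m) =
  \sum_j g m j *: restr_line (coords x) (coords w) (Q j).
Proof.
move=> Q_eq Gg; apply: poly_horner_eq => s; rewrite horner_restr_line horner_sum.
have /(congr1 (fun y => y m 0)) := Q_eq g (x + s *: w) Gg.
rewrite mulmxDr -scalemxAr !mxE (meval_eq _ (coordsDZ _ _ _)) => ->.
apply: eq_bigr => j _.
by rewrite mxE hornerZ horner_restr_line (meval_eq _ (coordsDZ _ _ _)).
Qed.

Lemma equivariant_vderiv_field G P Q :
  equivariant G (mpoly_map P) -> equivariant G (mpoly_map Q) ->
  equivariant G (mpoly_map (vderiv_field P Q)).
Proof.
move=> P_eq Q_eq g x Gg; apply/matrixP => m j; rewrite ord1 !mxE ffunE.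
have deriv_line0 y q :
    (vderiv P q).@[coords y] = (restr_line (coords y) (coords (mpoly_map P y)) q)^`().[0].
  rewrite deriv_restr_line horner_restr_line0 !meval_vderiv.
  by apply: eq_bigr => i _; rewrite ffunE mevalC coords_mpoly_map.
rewrite deriv_line0 P_eq // (restr_line_equivariant _ _ _ Q_eq Gg) raddf_sum horner_sum /=.
by apply: eq_bigr => b _; rewrite mxE derivZ hornerZ -deriv_line0 ffunE.
Qed.

Lemma vanishes_on_vderiv G Y P p : G_symmetric G Y -> equivariant G (mpoly_map P) ->
  vanishes_on Y p -> vanishes_on Y (vderiv P p).
Proof.
move=> [_ Ytan] P_eq Yp y Yy; rewrite meval_vderiv.
rewrite -[RHS](Ytan _ (conj (polymap_mpoly_map P) P_eq) y Yy p Yp).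
by apply: eq_bigr => i _; rewrite mxE.
Qed.

Lemma vanishes_on_deriv_along G Y Qs p : G_symmetric G Y ->
  {in Qs, forall Q, equivariant G (mpoly_map Q)} ->
  vanishes_on Y p -> vanishes_on Y (deriv_along Qs p).
Proof.
move=> Ysym; move Hj: (size Qs) => j; elim: j Qs Hj p => [|j IH] Qs.
  by move/size0nil => ->.
case/lastP: Qs => [//|Qs P]; rewrite size_rcons => -[szQs] p Qs_eq Yp y Yy.
have P_eq : equivariant G (mpoly_map P) by apply: Qs_eq; rewrite mem_rcons mem_head.
have {}Qs_eq : {in Qs, forall Q, equivariant G (mpoly_map Q)}.
  by move=> Q QQs; apply: Qs_eq; rewrite mem_rcons inE QQs orbT.
rewrite (canRL (addrK _) (esym (vderiv_deriv_along P Qs p))).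
rewrite mevalB (vanishes_on_vderiv Ysym P_eq (IH _ szQs _ Qs_eq Yp)) //.
rewrite (raddf_sum (meval (coords y))) big1 ?subrr // => l _; apply: IH => //.
  by rewrite size_set_nth (maxn_idPr (ltn_ord _)).
move=> Q; rewrite set_nthE ltn_ord mem_cat inE => /or3P[/mem_take|/eqP->|/mem_drop].
- exact: Qs_eq.
- by apply: equivariant_vderiv_field => //; exact/Qs_eq/mem_nth.
- exact: Qs_eq.
Qed.

Lemma G_symmetric_translate G Y Q x : [pchar k] =i pred0 ->
  G_symmetric G Y -> equivariant G (mpoly_map Q) -> Y x -> Y (x + mpoly_map Q x).
Proof.
move=> char0 Ysym Q_eq Yx; have [[S YS] _] := Ysym.
apply/YS => p Sp; have Yp : vanishes_on Y p by move=> y /YS; apply.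
set w := fun i => (Q i).@[coords x].
have line0 : restr_line (coords x) w p = 0.
  apply: poly_derivn0_eq0 char0 _ => j.
  rewrite derivn_restr_line horner_restr_line0.
  have -> : nseq j (const_field w) =
      [seq const_field (fun i => (Q' i).@[coords x]) | Q' <- nseq j Q] by rewrite map_nseq.
  rewrite -meval_deriv_along; apply: (vanishes_on_deriv_along Ysym) => //.
  by move=> Q'; rewrite mem_nseq => /andP[_ /eqP->].
have := congr1 (horner^~ 1) line0; rewrite horner_restr_line horner0 => <-.
by apply: meval_eq => i; rewrite mul1r /coords !mxE.
Qed.

Lemma G_symmetric_EndG_stable G Y phi x : [pchar k] =i pred0 ->
  G_symmetric G Y -> EndG G phi -> Y x -> Y (phi x).
Proof.
move=> char0 Ysym [/polymapP [Q phiQ] phi_eq] Yx.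
pose Q' : field := Q - [ffun i => 'X_i].
have Q'E y : mpoly_map Q' y = phi y - y.
  by apply/matrixP => i j; rewrite ord1 phiQ !mxE !ffunE mevalB mevalXU.
have Q'_eq : equivariant G (mpoly_map Q') by move=> g y Gg; rewrite !Q'E phi_eq // mulmxBr.
by have := G_symmetric_translate char0 Ysym Q'_eq Yx; rewrite Q'E addrC subrK.
Qed.

Lemma EndG_id G : EndG G id.
Proof. by split=> [|g x _] //; exists (fun i => 'X_i) => x i; rewrite mevalXU. Qed.

Lemma EndG_comp G phi psi : EndG G phi -> EndG G psi -> EndG G (phi \o psi).
Proof.
move=> [/polymapP [P phiP] phi_eq] [/polymapP [Q psiQ] psi_eq]; split=> [|g x Gg] /=.
  exists (fun i => P i \mPo [tuple Q j | j < n]) => x i.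
  rewrite /= comp_mpoly_meval phiP psiQ mxE; apply: meval_eq => j.
  by rewrite tnth_mktuple coords_mpoly_map.
by rewrite psi_eq // phi_eq.
Qed.

Lemma EndG_at_subspace G v : is_subspace (EndG_at G v).
Proof.
split.
  exists (fun _ => 0); split=> //; split=> [|g x _]; last by rewrite mulmx0.
  by exists (fun _ => 0) => x i; rewrite mxE meval0.
move=> _ _ s [phi [[/polymapP [P phiP] phi_eq] ->]] [psi [[/polymapP [Q psiQ] psi_eq] ->]].
exists (fun y => phi y + s *: psi y); split=> //; split=> [|g y Gg].
  exists (fun i => P i + s *: Q i) => y i.
  by rewrite phiP psiQ !mxE mevalD mevalZ.
by rewrite phi_eq // psi_eq // mulmxDr -scalemxAr.
Qed.

Lemma is_M_EndG_at G v : [pchar k] =i pred0 -> is_M G v (EndG_at G v).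
Proof.
move=> char0; split.
- apply: subspace_G_symmetric; first exact: EndG_at_subspace.
  by move=> xi _ xi_End [phi [phi_End ->]]; exists (xi \o phi); split=> //; exact: EndG_comp.
- by exists id; split=> //; exact: EndG_id.
- by move=> Y Ysym Yv _ [phi [phi_End ->]]; apply: G_symmetric_EndG_stable phi_End Yv.
Qed.

Lemma EndG_at_fixed_stab G v w : EndG_at G v w -> fixed (stab G v) w.
Proof. by move=> [phi [[_ phi_eq] ->]] g [Gg gv]; rewrite -phi_eq // gv. Qed.

End Minimality.

Theorem proposition4p3p2 (k : closedFieldType) (n : nat)
    (hchar : [pchar k] =i pred0)
    (G : 'M[k]_n -> Prop) (hG : closed_subgroup G) :
  (forall H : 'M[k]_n -> Prop, closed_subgroup H -> (forall h, H h -> G h) ->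
     G_symmetric G (fixed H)) /\
  (forall v : 'cV[k]_n,
     is_M G v (EndG_at G v) /\
     (forall w, EndG_at G v w -> fixed (stab G v) w)).
Proof.
split=> [H _ HG | v]; first exact: fixed_G_symmetric.
by split; [exact: is_M_EndG_at | exact: EndG_at_fixed_stab].
Qed.
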